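(* Let $S^2\subset\mathbb{R}^3$ be the unit sphere, let $S^2\times\mathbb{R}$ be the trivial line bundle with the standard inner product, and let $TS^2$ carry the metric induced from $\mathbb{R}^3$. Define sections $f_1\equiv 1$, $f_2\equiv f_3\equiv 0$ of $S^2\times\mathbb{R}$ (a moving Parseval frame for it). Although $(S^2\times\mathbb{R})\oplus TS^2\cong S^2\times\mathbb{R}^3$ admits a moving basis, there is no moving basis $(e_i)_{i=1}^3$ of continuous sections of $(S^2\times\mathbb{R})\oplus TS^2$ such that $P_{S^2\times\mathbb{R}}e_i=f_i$ for $i=1,2,3$, where $P_{S^2\times\mathbb{R}}$ is the fiberwise orthogonal projection onto the first summand.
   Context: A moving basis of a rank $k$ vector bundle is a sequence of $k$ sections that form a basis of each fiber. A sequence of vectors $(x_i)_{i=1}^k$ in a finite-dimensional real inner product space $H$ is a Parseval frame for $H$ if $\sum_{i=1}^k\langle x,x_i\rangle^2=\|x\|^2$ for all $x\in H$; a moving Parseval frame of a bundle is a sequence of sections forming a Parseval frame of each fiber. *)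

From Stdlib Require Import Reals.
Open Scope R_scope.

Record V3 := mkV3 { c1 : R; c2 : R; c3 : R }.

Definition dot (u v : V3) : R := c1 u * c1 v + c2 u * c2 v + c3 u * c3 v.
Definition vadd (u v : V3) : V3 := mkV3 (c1 u + c1 v) (c2 u + c2 v) (c3 u + c3 v).
Definition vscale (a : R) (u : V3) : V3 := mkV3 (a * c1 u) (a * c2 u) (a * c3 u).
Definition vsub (u v : V3) : V3 := vadd u (vscale (-1) v).
Definition vzero : V3 := mkV3 0 0 0.

Definition on_sphere (x : V3) : Prop := dot x x = 1.

Definition tangent (x v : V3) : Prop := dot x v = 0.

(* Elements of the total space fibres of (S^2 x R) (+) TS^2 : pairs (t, v),
   t in R (the trivial line), v in T_x S^2. *)
Definition FV := (R * V3)%type.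
Definition in_fiber (x : V3) (w : FV) : Prop := tangent x (snd w).
Definition fadd (w z : FV) : FV := (fst w + fst z, vadd (snd w) (snd z)).
Definition fscale (a : R) (w : FV) : FV := (a * fst w, vscale a (snd w)).
Definition fzero : FV := (0, vzero).
Definition comb3 (a b c : R) (w1 w2 w3 : FV) : FV :=
  fadd (fscale a w1) (fadd (fscale b w2) (fscale c w3)).

Definition dist3 (x y : V3) : R := sqrt (dot (vsub x y) (vsub x y)).
Definition distF (w z : FV) : R :=
  sqrt ((fst w - fst z) ^ 2 + dot (vsub (snd w) (snd z)) (vsub (snd w) (snd z))).

Definition continuous_on_S2 (s : V3 -> FV) : Prop :=
  forall x, on_sphere x -> forall eps, 0 < eps ->
    exists delta, 0 < delta /\
      forall y, on_sphere y -> dist3 x y < delta -> distF (s x) (s y) < eps.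

Definition cont_section (s : V3 -> FV) : Prop :=
  (forall x, on_sphere x -> in_fiber x (s x)) /\ continuous_on_S2 s.

Definition fiber_basis (x : V3) (w1 w2 w3 : FV) : Prop :=
  in_fiber x w1 /\ in_fiber x w2 /\ in_fiber x w3 /\
  (forall a b c, comb3 a b c w1 w2 w3 = fzero -> a = 0 /\ b = 0 /\ c = 0) /\
  (forall w, in_fiber x w -> exists a b c, w = comb3 a b c w1 w2 w3).

Definition moving_basis (e1 e2 e3 : V3 -> FV) : Prop :=
  cont_section e1 /\ cont_section e2 /\ cont_section e3 /\
  forall x, on_sphere x -> fiber_basis x (e1 x) (e2 x) (e3 x).

Definition parseval_R (a b c : R) : Prop :=
  forall t : R, (t * a) ^ 2 + (t * b) ^ 2 + (t * c) ^ 2 = t ^ 2.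

Definition f1 (_ : V3) : R := 1.
Definition f2 (_ : V3) : R := 0.
Definition f3 (_ : V3) : R := 0.

(* Parts 1 and 2 of mainTheorem5 are elementary: f1 = 1, f2 = f3 = 0 is a Parseval frame of R,
   and k |-> (<k,x>, k - <k,x> x) identifies R^3 with the fibre R (+) T_x S^2, so the standard
   basis of R^3 yields a continuous moving basis (frame_section).

   Part 3 reduces to the hairy ball theorem: a moving basis with P e2 = f2 = 0 makes
   x |-> snd (e2 x) a continuous nowhere-vanishing tangent field on S^2.  The hairy ball theorem
   is proved by a discrete winding-number argument:
   - read the field through the two stereographic charts of S^2 (chart_pull, conformal by
     chart_pull_norm) over the unit disk, parametrized in polar coordinates by the unit square,
     and normalize it, giving two maps F_N, F_S : [0,1]^2 -> S^1 (square_field);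
   - by uniform continuity (Coquelicot's uniform_continuity_2d), on a fine grid neighbouring
     values of F_e differ by an angle < pi/4, so angles add (angle_add) and the discrete winding
     of the loop t |-> F_e (s, t) does not depend on s (row_winding_invariant); the loop at s = 0
     is constant, hence both windings on the equator s = 1 vanish (outer_winding_zero);
   - on the equator F_S is the reflection of F_N across the tangent line of the circle
     (chart_pull_equator), which forces winding_S = 4 pi - winding_N (equator_winding_relation). *)

From Pilot Require Import Defs.
From Stdlib Require Import Reals Lra Lia Nsatz Classical.
From Coquelicot Require Import Hierarchy Complex Continuity.
(* Re-import so that the coordinates c1, c2, c3 of V3 shadow Stdlib's [c1]. *)
Import Defs.
Open Scope R_scope.

Lemma sqrt_le_of_sq_le X Y : 0 <= Y -> X <= Y * Y -> sqrt X <= Y.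
Proof. intros HY HX. rewrite <- (sqrt_square Y HY). now apply sqrt_le_1_alt. Qed.

Lemma sqrt_lt_of_sq_lt X Y : 0 < Y -> X < Y * Y -> sqrt X < Y.
Proof.
  intros HY HX. destruct (Rle_lt_dec X 0) as [Hneg | Hpos].
  - rewrite sqrt_neg_0; assumption.
  - rewrite <- (sqrt_square Y) by lra. apply sqrt_lt_1_alt; lra.
Qed.

Lemma dist3_eq x y : dist3 x y =
  sqrt ((c1 x - c1 y) * (c1 x - c1 y) + (c2 x - c2 y) * (c2 x - c2 y) + (c3 x - c3 y) * (c3 x - c3 y)).
Proof. unfold dist3, dot, vsub, vadd, vscale; simpl. f_equal; ring. Qed.

Lemma distF_eq w z : distF w z =
  sqrt ((fst w - fst z) * (fst w - fst z) + (c1 (snd w) - c1 (snd z)) * (c1 (snd w) - c1 (snd z))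
      + (c2 (snd w) - c2 (snd z)) * (c2 (snd w) - c2 (snd z))
      + (c3 (snd w) - c3 (snd z)) * (c3 (snd w) - c3 (snd z))).
Proof. unfold distF, dot, vsub, vadd, vscale; simpl. f_equal; ring. Qed.

Lemma coord_le_dist3 x y :
  Rabs (c1 x - c1 y) <= dist3 x y /\ Rabs (c2 x - c2 y) <= dist3 x y /\
  Rabs (c3 x - c3 y) <= dist3 x y.
Proof.
  rewrite dist3_eq.
  assert (Hsq : forall a b c, a * a <= a * a + b * b + c * c /\ b * b <= a * a + b * b + c * c /\
                c * c <= a * a + b * b + c * c) by (intros; nra).
  destruct (Hsq (c1 x - c1 y) (c2 x - c2 y) (c3 x - c3 y)) as (H1 & H2 & H3).
  repeat split; rewrite <- sqrt_Rsqr_abs; apply sqrt_le_1_alt; unfold Rsqr; lra.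
Qed.

Lemma dist3_lt_of_coords x y d : 0 < d ->
  Rabs (c1 x - c1 y) < d / 2 -> Rabs (c2 x - c2 y) < d / 2 -> Rabs (c3 x - c3 y) < d / 2 ->
  dist3 x y < d.
Proof.
  intros Hd H1 H2 H3. rewrite dist3_eq. apply sqrt_lt_of_sq_lt; [lra|].
  apply Rabs_def2 in H1, H2, H3. nra.
Qed.

Lemma sq_abs r : r * r = Rabs r * Rabs r.
Proof. rewrite <- Rabs_mult, Rabs_pos_eq; nra. Qed.

Lemma distF_le_coords w z : distF w z <=
  Rabs (fst w - fst z) + Rabs (c1 (snd w) - c1 (snd z)) + Rabs (c2 (snd w) - c2 (snd z))
  + Rabs (c3 (snd w) - c3 (snd z)).
Proof.
  rewrite distF_eq.
  set (a := fst w - fst z); set (b1 := c1 (snd w) - c1 (snd z));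
  set (b2 := c2 (snd w) - c2 (snd z)); set (b3 := c3 (snd w) - c3 (snd z)).
  pose proof (Rabs_pos a); pose proof (Rabs_pos b1); pose proof (Rabs_pos b2); pose proof (Rabs_pos b3).
  apply sqrt_le_of_sq_le; [lra|]. rewrite (sq_abs a), (sq_abs b1), (sq_abs b2), (sq_abs b3). nra.
Qed.

Lemma dist3_snd_le_distF w z : dist3 (snd w) (snd z) <= distF w z.
Proof.
  rewrite dist3_eq, distF_eq. apply sqrt_le_1_alt.
  pose proof (Rle_0_sqr (fst w - fst z)). unfold Rsqr in *. lra.
Qed.

Lemma dot_self_pos w : w <> vzero -> 0 < dot w w.
Proof.
  intros Hw. destruct w as [w1 w2 w3]. unfold dot; simpl.
  destruct (Rle_lt_dec (w1 * w1 + w2 * w2 + w3 * w3) 0) as [Hle|]; [|assumption].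
  exfalso. apply Hw. unfold vzero. f_equal; nra.
Qed.

Lemma sphere_coord_bound x : on_sphere x -> Rabs (c1 x) <= 1 /\ Rabs (c2 x) <= 1 /\ Rabs (c3 x) <= 1.
Proof.
  unfold on_sphere, dot. intros Hx.
  assert (Hle1 : forall a, a * a <= 1 -> Rabs a <= 1) by (intros a Ha; rewrite sq_abs in Ha; pose proof (Rabs_pos a); nra).
  repeat split; apply Hle1; nra.
Qed.

Lemma continuous_of_lipschitz (s : V3 -> FV) L : 0 <= L ->
  (forall x y, on_sphere x -> on_sphere y ->
     Rabs (fst (s x) - fst (s y)) <= L * dist3 x y /\
     Rabs (c1 (snd (s x)) - c1 (snd (s y))) <= L * dist3 x y /\
     Rabs (c2 (snd (s x)) - c2 (snd (s y))) <= L * dist3 x y /\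
     Rabs (c3 (snd (s x)) - c3 (snd (s y))) <= L * dist3 x y) ->
  continuous_on_S2 s.
Proof.
  intros HL Hlip x Hx eps Heps. exists (eps / (4 * L + 1)). split.
  { apply Rdiv_lt_0_compat; lra. }
  intros y Hy Hd. destruct (Hlip x y Hx Hy) as (H0 & H1 & H2 & H3).
  assert (Hdist : (4 * L + 1) * dist3 x y < eps).
  { apply (Rmult_lt_compat_l (4 * L + 1)) in Hd; [|lra]. field_simplify in Hd; lra. }
  pose proof (distF_le_coords (s x) (s y)). assert (0 <= dist3 x y) by apply sqrt_pos. nra.
Qed.

(* The fibre of (S^2 x R) (+) TS^2 over x is identified with R^3 by
   k |-> (<k,x>, k - <k,x> x); a constant k therefore gives a section. *)
Definition frame_section (k x : V3) : FV := (dot k x, vsub k (vscale (dot k x) x)).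

Definition coef_sum (k : V3) : R := Rabs (c1 k) + Rabs (c2 k) + Rabs (c3 k).

Lemma dot_lipschitz k x y : Rabs (dot k x - dot k y) <= coef_sum k * dist3 x y.
Proof.
  destruct (coord_le_dist3 x y) as (D1 & D2 & D3). unfold coef_sum.
  replace (dot k x - dot k y) with (c1 k * (c1 x - c1 y) + c2 k * (c2 x - c2 y) + c3 k * (c3 x - c3 y))
    by (unfold dot; ring).
  eapply Rle_trans; [apply Rabs_triang|]. eapply Rle_trans; [apply Rplus_le_compat_r, Rabs_triang|].
  rewrite !Rabs_mult.
  pose proof (Rabs_pos (c1 k)); pose proof (Rabs_pos (c2 k)); pose proof (Rabs_pos (c3 k)). nra.
Qed.

Lemma dot_sphere_bound k y : on_sphere y -> Rabs (dot k y) <= coef_sum k.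
Proof.
  intros Hy. destruct (sphere_coord_bound y Hy) as (B1 & B2 & B3). unfold coef_sum, dot.
  eapply Rle_trans; [apply Rabs_triang|]. eapply Rle_trans; [apply Rplus_le_compat_r, Rabs_triang|].
  rewrite !Rabs_mult.
  pose proof (Rabs_pos (c1 k)); pose proof (Rabs_pos (c2 k)); pose proof (Rabs_pos (c3 k)). nra.
Qed.

Lemma prod_diff_bound a b a' b' A d : Rabs (a - a') <= A * d -> Rabs b <= 1 -> Rabs a' <= A ->
  Rabs (b - b') <= d -> Rabs (a * b - a' * b') <= 2 * A * d.
Proof.
  intros Ha Hb Ha' Hbb. replace (a * b - a' * b') with ((a - a') * b + a' * (b - b')) by ring.
  eapply Rle_trans; [apply Rabs_triang|]. rewrite !Rabs_mult.
  pose proof (Rabs_pos (a - a')); pose proof (Rabs_pos a'); pose proof (Rabs_pos (b - b')). nra.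
Qed.

Lemma frame_section_continuous k : continuous_on_S2 (frame_section k).
Proof.
  apply (continuous_of_lipschitz _ (2 * coef_sum k)).
  { unfold coef_sum. pose proof (Rabs_pos (c1 k)); pose proof (Rabs_pos (c2 k)); pose proof (Rabs_pos (c3 k)). lra. }
  intros x y Hx Hy. pose proof (dot_lipschitz k x y) as Hdot. pose proof (dot_sphere_bound k y Hy).
  destruct (coord_le_dist3 x y) as (D1 & D2 & D3). destruct (sphere_coord_bound x Hx) as (B1 & B2 & B3).
  assert (Hnn : 0 <= coef_sum k * dist3 x y) by (pose proof (Rabs_pos (dot k x - dot k y)); lra).
  assert (Hcomp : forall c a a', Rabs (c + -1 * (dot k x * a) - (c + -1 * (dot k y * a'))) =
                                 Rabs (dot k x * a - dot k y * a')).
  { intros. rewrite <- Rabs_Ropp. f_equal. ring. }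
  unfold frame_section, vsub, vadd, vscale; simpl. rewrite !Hcomp.
  repeat split; [lra | apply prod_diff_bound ..]; assumption.
Qed.

Definition b1 : V3 := mkV3 1 0 0.
Definition b2 : V3 := mkV3 0 1 0.
Definition b3 : V3 := mkV3 0 0 1.

Lemma standard_frame_basis x : on_sphere x ->
  fiber_basis x (frame_section b1 x) (frame_section b2 x) (frame_section b3 x).
Proof.
  destruct x as [x1 x2 x3]. unfold on_sphere, dot; simpl. intros Hx.
  unfold fiber_basis, in_fiber, tangent, frame_section, b1, b2, b3, dot, vsub, vadd, vscale; simpl.
  split; [nsatz|]; split; [nsatz|]; split; [nsatz|]; split.
  - intros a b c Hcomb. unfold comb3, fadd, fscale, fzero, vadd, vscale, vzero in Hcomb; simpl in Hcomb.
    injection Hcomb as H0 Ha Hb Hc. repeat split; nsatz.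
  - intros [t [v1 v2 v3]] Hv. simpl in Hv.
    exists (t * x1 + v1), (t * x2 + v2), (t * x3 + v3).
    unfold comb3, fadd, fscale, vadd, vscale; simpl. f_equal; [|f_equal]; nsatz.
Qed.

Lemma trivializing_moving_basis :
  moving_basis (frame_section b1) (frame_section b2) (frame_section b3).
Proof.
  assert (Hfib : forall k x, on_sphere x -> in_fiber x (frame_section k x)).
  { intros k [x1 x2 x3] Hx. unfold on_sphere, in_fiber, tangent, frame_section, dot, vsub, vadd, vscale in *;
    simpl in *. nsatz. }
  split; [split|split; [split|split; [split|]]]; auto using frame_section_continuous, standard_frame_basis.
Qed.

Definition quarter (z : C) : Prop := Rabs (Im z) < Re z.

(* The argument of z, valid for z in the right half-plane. *)
Definition small_arg (z : C) : R := atan (Im z / Re z).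

Definition angle (a b : C) : R := small_arg (Cmult (Cconj a) b).

Lemma quarter_ratio z : quarter z -> 0 < Re z /\ Rabs (Im z / Re z) < 1.
Proof.
  unfold quarter. intros Hz. assert (Hre : 0 < Re z) by (pose proof (Rabs_pos (Im z)); lra).
  split; [assumption|]. unfold Rdiv. rewrite Rabs_mult, Rabs_inv, (Rabs_right (Re z)) by lra.
  apply (Rmult_lt_reg_r (Re z)); [assumption|]. field_simplify; lra.
Qed.

Lemma atan_lt_quarter_pi r : Rabs r < 1 -> - (PI / 4) < atan r < PI / 4.
Proof.
  intros Hr. apply Rabs_def2 in Hr. destruct Hr as [Hlt Hgt].
  pose proof (atan_increasing _ _ Hlt). pose proof (atan_increasing _ _ Hgt).
  rewrite atan_opp, atan_1 in *. lra.
Qed.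

Lemma quarter_mul_re_pos z w : quarter z -> quarter w -> 0 < Re (Cmult z w).
Proof.
  destruct z as [x1 y1], w as [x2 y2]. unfold quarter, Cmult, Re, Im; simpl. intros Hz Hw.
  apply Rabs_def2 in Hz, Hw. nra.
Qed.

(* Arguments add on the sector, since their sum stays in (-pi/2, pi/2). *)
Lemma small_arg_mul z w : quarter z -> quarter w -> small_arg (Cmult z w) = small_arg z + small_arg w.
Proof.
  intros Hz Hw. pose proof (quarter_mul_re_pos z w Hz Hw) as Hre.
  destruct (quarter_ratio z Hz) as [Pz Rz], (quarter_ratio w Hw) as [Pw Rw].
  pose proof (atan_lt_quarter_pi _ Rz) as Az. pose proof (atan_lt_quarter_pi _ Rw) as Aw.
  destruct z as [x1 y1], w as [x2 y2]. unfold small_arg, Cmult, Re, Im in *; simpl in *.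
  set (a := atan (y1 / x1)) in *. set (b := atan (y2 / x2)) in *. pose proof PI_RGT_0.
  assert (ca : cos a <> 0) by (apply Rgt_not_eq, cos_gt_0; lra).
  assert (cb : cos b <> 0) by (apply Rgt_not_eq, cos_gt_0; lra).
  assert (cab : cos (a + b) <> 0) by (apply Rgt_not_eq, cos_gt_0; lra).
  apply Rabs_def2 in Rz, Rw.
  assert (Hne : 1 - tan a * tan b <> 0) by (unfold a, b; rewrite !tan_atan; nra).
  pose proof (tan_plus a b ca cb cab Hne) as Htan. unfold a, b in Htan. rewrite !tan_atan in Htan.
  rewrite <- (atan_tan (a + b)) by lra. unfold a, b. rewrite Htan. f_equal. field. lra.
Qed.

Lemma small_arg_scale k z : 0 < k -> Re z <> 0 -> small_arg (k * Re z, k * Im z) = small_arg z.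
Proof. intros Hk Hz. unfold small_arg; simpl. f_equal. field. lra. Qed.

Lemma small_arg_conj z : small_arg (Cconj z) = - small_arg z.
Proof. unfold small_arg, Cconj, Re, Im; simpl. rewrite <- atan_opp. f_equal. unfold Rdiv. ring. Qed.

Lemma quarter_conj z : quarter z -> quarter (Cconj z).
Proof. unfold quarter, Cconj, Re, Im; simpl. now rewrite Rabs_Ropp. Qed.

Lemma angle_add a b d : quarter (Cmult (Cconj a) b) -> quarter (Cmult (Cconj b) d) ->
  angle a b + angle b d = angle a d.
Proof.
  intros Hab Hbd. unfold angle. rewrite <- small_arg_mul by assumption.
  pose proof (quarter_mul_re_pos _ _ Hab Hbd) as Hpos.
  set (nb := fst b * fst b + snd b * snd b).
  assert (E : Cmult (Cmult (Cconj a) b) (Cmult (Cconj b) d) =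
              (nb * Re (Cmult (Cconj a) d), nb * Im (Cmult (Cconj a) d))).
  { unfold nb, Cmult, Cconj, Re, Im; simpl. f_equal; ring. }
  rewrite E in Hpos |- *. change (0 < nb * Re (Cmult (Cconj a) d)) in Hpos.
  assert (Hnb : 0 <= nb) by (unfold nb; nra).
  apply small_arg_scale.
  - destruct Hnb as [|Z]; [assumption|]. rewrite <- Z in Hpos. lra.
  - intros Z. rewrite Z in Hpos. lra.
Qed.

Lemma angle_self a : angle a a = 0.
Proof.
  unfold angle, small_arg, Cmult, Cconj, Re, Im; simpl.
  replace (fst a * snd a + - snd a * fst a) with 0 by ring. unfold Rdiv. rewrite Rmult_0_l. apply atan_0.
Qed.

Lemma unit_quarter a b : fst a * fst a + snd a * snd a = 1 -> fst b * fst b + snd b * snd b = 1 ->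
  (fst a - fst b) * (fst a - fst b) + (snd a - snd b) * (snd a - snd b) < 1 / 4 ->
  quarter (Cmult (Cconj a) b).
Proof.
  destruct a as [a1 a2], b as [b1 b2]. unfold quarter, Cmult, Cconj, Re, Im; simpl. intros Ha Hb Hd.
  set (re := a1 * b1 - - a2 * b2). set (im := a1 * b2 + - a2 * b1).
  assert (re > 7 / 8) by (unfold re; nra).
  assert (im * im + re * re = 1) by (unfold im, re; nra).
  apply Rabs_def1; nra.
Qed.

Lemma square_quarter z : 3 * Rabs (Im z) < Re z -> quarter (Cmult z z).
Proof.
  destruct z as [x y]. unfold quarter, Cmult, Re, Im; simpl. intros H.
  destruct (Rcase_abs y); [rewrite Rabs_left in H by lra | rewrite Rabs_right in H by lra];
    apply Rabs_def1; nra.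
Qed.

(* For |p| = 1: the reflection of v across the tangent line of the unit circle at p. *)
Definition reflect (p v : C) : C := Copp (Cmult (Cmult p p) (Cconj v)).

Lemma angle_reflect p q a b : 3 * Rabs (Im (Cmult (Cconj p) q)) < Re (Cmult (Cconj p) q) ->
  quarter (Cmult (Cconj a) b) -> angle (reflect p a) (reflect q b) = 2 * angle p q - angle a b.
Proof.
  intros Hpq Hab. set (z := Cmult (Cconj p) q) in *. set (c := Cmult (Cconj a) b) in *.
  assert (Hz : quarter z) by (unfold quarter; pose proof (Rabs_pos (Im z)); lra).
  unfold angle. fold z c.
  assert (E : Cmult (Cconj (reflect p a)) (reflect q b) = Cmult (Cmult z z) (Cconj c)).
  { unfold z, c, reflect, Copp, Cmult, Cconj; simpl. f_equal; ring. }
  rewrite E, small_arg_mul, small_arg_mul, small_arg_conj by auto using square_quarter, quarter_conj.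
  ring.
Qed.

Lemma small_rotation h : 0 < h <= 1 / 4 ->
  3 * Rabs (sin h) < cos h /\ small_arg (cos h, sin h) = h.
Proof.
  intros Hh. pose proof PI2_1. pose proof PI_RGT_0.
  assert (Sp : 0 <= sin h) by (apply sin_ge_0; lra). pose proof (sin_lt_x h ltac:(lra)).
  assert (Cp : 0 < cos h) by (apply cos_gt_0; lra). pose proof (sin2_cos2 h). unfold Rsqr in *.
  split; [rewrite Rabs_right by lra; nra|].
  unfold small_arg, Re, Im; simpl. change (sin h / cos h) with (tan h). apply atan_tan. lra.
Qed.

Lemma angle_square a b c d :
  quarter (Cmult (Cconj a) b) -> quarter (Cmult (Cconj b) d) ->
  quarter (Cmult (Cconj a) c) -> quarter (Cmult (Cconj c) d) ->
  angle a b + angle b d = angle a c + angle c d.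
Proof. intros. rewrite !angle_add by assumption. reflexivity. Qed.

Section Winding.
Variable G : nat -> nat -> C.
Variables M N : nat.

(* The total turning of row i: a discrete winding number (times 2 pi). *)
Definition row_winding (i : nat) : R := sum_f_R0 (fun j => angle (G i j) (G i (S j))) N.

Hypothesis row_close : forall i j, (i <= M)%nat -> (j <= N)%nat -> quarter (Cmult (Cconj (G i j)) (G i (S j))).
Hypothesis column_close : forall i j, (i < M)%nat -> (j <= S N)%nat -> quarter (Cmult (Cconj (G i j)) (G (S i) j)).
Hypothesis row_closed : forall i, (i <= M)%nat -> G i (S N) = G i 0.

Lemma row_winding_succ i : (i < M)%nat -> row_winding i = row_winding (S i).
Proof.
  intros Hi.
  assert (Hpartial : forall n, (n <= N)%nat ->
    sum_f_R0 (fun j => angle (G i j) (G i (S j))) n + angle (G i (S n)) (G (S i) (S n)) =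
    angle (G i 0) (G (S i) 0) + sum_f_R0 (fun j => angle (G (S i) j) (G (S i) (S j))) n).
  { induction n as [|n IH]; intros Hn; simpl.
    - apply angle_square; first [apply row_close | apply column_close]; lia.
    - specialize (IH ltac:(lia)).
      assert (angle (G i (S n)) (G i (S (S n))) + angle (G i (S (S n))) (G (S i) (S (S n))) =
              angle (G i (S n)) (G (S i) (S n)) + angle (G (S i) (S n)) (G (S i) (S (S n)))).
      { apply angle_square; first [apply row_close | apply column_close]; lia. }
      lra. }
  unfold row_winding. specialize (Hpartial N (le_n N)).
  rewrite row_closed, (row_closed (S i)) in Hpartial by lia. lra.
Qed.

Lemma row_winding_invariant : row_winding M = row_winding 0.
Proof.
  assert (Hall : forall i, (i <= M)%nat -> row_winding i = row_winding 0).
  { induction i as [|i IH]; intros Hi; [reflexivity|]. rewrite <- row_winding_succ by lia. apply IH; lia. }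
  apply Hall, le_n.
Qed.
End Winding.

(* The conformal factor of the stereographic charts. *)
Definition chart_denom (p : C) : R := 1 + Re p * Re p + Im p * Im p.

(* Inverse stereographic projection from the pole (0,0,-e), e = 1 or -1: it maps the unit disk
   onto the hemisphere e x3 >= 0 and the unit circle onto the equator. *)
Definition chart (e : R) (p : C) : V3 :=
  mkV3 (2 * Re p / chart_denom p) (2 * Im p / chart_denom p)
       (e * (1 - Re p * Re p - Im p * Im p) / chart_denom p).

Lemma chart_denom_pos p : 0 < chart_denom p.
Proof. unfold chart_denom. nra. Qed.

Lemma chart_on_sphere e p : e * e = 1 -> on_sphere (chart e p).
Proof.
  intros He. pose proof (chart_denom_pos p) as HD. unfold on_sphere, dot, chart; simpl.
  set (D := chart_denom p) in *. set (q := 1 - Re p * Re p - Im p * Im p).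
  transitivity ((4 * Re p * Re p + 4 * Im p * Im p + (e * e) * (q * q)) / (D * D)); [field; lra|].
  rewrite He. unfold q, D, chart_denom. field. nra.
Qed.

(* For w tangent at chart e p, this is twice the differential of the stereographic projection
   from (0,0,-e) applied to w, written (using tangency) as a polynomial in p and w. *)
Definition chart_pull (e : R) (p : C) (w : V3) : C :=
  let p1 := Re p in let p2 := Im p in
  ((1 - p1 * p1 + p2 * p2) * c1 w - 2 * p1 * p2 * c2 w - 2 * e * p1 * c3 w,
   - 2 * p1 * p2 * c1 w + (1 + p1 * p1 - p2 * p2) * c2 w - 2 * e * p2 * c3 w).

(* Stereographic projection is conformal: chart_pull multiplies lengths of tangent vectors by
   chart_denom p, so it does not kill nonzero tangent vectors. *)
Lemma chart_pull_norm e p w : e * e = 1 -> tangent (chart e p) w ->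
  Re (chart_pull e p w) * Re (chart_pull e p w) + Im (chart_pull e p w) * Im (chart_pull e p w) =
  chart_denom p * chart_denom p * dot w w.
Proof.
  intros He Ht. pose proof (chart_denom_pos p) as HD.
  unfold tangent, dot, chart in Ht; simpl in Ht.
  assert (Ht' : 2 * Re p * c1 w + 2 * Im p * c2 w + e * (1 - Re p * Re p - Im p * Im p) * c3 w = 0).
  { apply (Rmult_eq_reg_r (/ chart_denom p)); [|apply Rinv_neq_0_compat; lra].
    rewrite Rmult_0_l, <- Ht. field. lra. }
  destruct p as [p1 p2]; destruct w as [w1 w2 w3]. unfold chart_pull, chart_denom, dot, Re, Im in *; simpl in *.
  clear Ht HD. nsatz.
Qed.

Lemma chart_equator p : Re p * Re p + Im p * Im p = 1 -> chart (-1) p = chart 1 p.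
Proof.
  intros Hp. unfold chart. f_equal.
  replace (1 - Re p * Re p - Im p * Im p) with 0 by lra. field. pose proof (chart_denom_pos p). lra.
Qed.

Lemma chart_pull_equator p w : Re p * Re p + Im p * Im p = 1 -> tangent (chart 1 p) w ->
  chart_pull (-1) p w = reflect p (chart_pull 1 p w).
Proof.
  intros Hp Ht. unfold tangent, dot, chart in Ht; simpl in Ht.
  replace (chart_denom p) with 2 in Ht by (unfold chart_denom; lra).
  replace (1 - Re p * Re p - Im p * Im p) with 0 in Ht by lra.
  assert (Ht' : Re p * c1 w + Im p * c2 w = 0) by lra.
  destruct p as [p1 p2]; destruct w as [w1 w2 w3].
  unfold chart_pull, reflect, Copp, Cmult, Cconj, Re, Im in *; simpl in *. f_equal; nsatz.
Qed.

Definition continuous_field (u : V3 -> V3) : Prop :=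
  forall x, on_sphere x -> forall eps, 0 < eps -> exists delta, 0 < delta /\
    forall y, on_sphere y -> dist3 x y < delta -> dist3 (u x) (u y) < eps.

Definition continuity_2d_V3 (X : R -> R -> V3) (s t : R) : Prop :=
  forall eps, 0 < eps -> locally_2d (fun a b => dist3 (X s t) (X a b) < eps) s t.

Lemma continuity_2d_V3_of_coords X s t :
  continuity_2d_pt (fun a b => c1 (X a b)) s t -> continuity_2d_pt (fun a b => c2 (X a b)) s t ->
  continuity_2d_pt (fun a b => c3 (X a b)) s t -> continuity_2d_V3 X s t.
Proof.
  intros H1 H2 H3 eps Heps. set (half := mkposreal (eps / 2) ltac:(lra)).
  generalize (locally_2d_and _ _ s t (H1 half) (locally_2d_and _ _ s t (H2 half) (H3 half))).
  apply locally_2d_impl, locally_2d_forall. intros a b (D1 & D2 & D3).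
  apply dist3_lt_of_coords; [assumption|..]; rewrite Rabs_minus_sym; assumption.
Qed.

Lemma coords_of_continuity_2d_V3 X s t : continuity_2d_V3 X s t ->
  continuity_2d_pt (fun a b => c1 (X a b)) s t /\ continuity_2d_pt (fun a b => c2 (X a b)) s t /\
  continuity_2d_pt (fun a b => c3 (X a b)) s t.
Proof.
  intros HX.
  repeat split; intros eps; generalize (HX eps (cond_pos eps));
    apply locally_2d_impl, locally_2d_forall; intros a b Hd; rewrite Rabs_minus_sym;
    destruct (coord_le_dist3 (X s t) (X a b)) as (D1 & D2 & D3); lra.
Qed.

Lemma continuity_2d_V3_comp u X s t : continuous_field u -> (forall a b, on_sphere (X a b)) ->
  continuity_2d_V3 X s t -> continuity_2d_V3 (fun a b => u (X a b)) s t.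
Proof.
  intros Hu Hsph HX eps Heps. destruct (Hu (X s t) (Hsph s t) eps Heps) as (delta & Hdelta & Hclose).
  apply (locally_2d_impl _ _ s t (locally_2d_forall _ s t (fun a b => Hclose (X a b) (Hsph a b)))).
  apply HX, Hdelta.
Qed.

Lemma continuity_2d_pt_div f g s t : continuity_2d_pt f s t -> continuity_2d_pt g s t -> g s t <> 0 ->
  continuity_2d_pt (fun a b => f a b / g a b) s t.
Proof. intros Hf Hg Hnz. apply continuity_2d_pt_mult; [assumption|]. now apply continuity_2d_pt_inv. Qed.

Ltac continuity_2d :=
  repeat first
    [ assumption
    | apply continuity_2d_pt_plus | apply continuity_2d_pt_minus | apply continuity_2d_pt_mult
    | apply continuity_2d_pt_opp | apply continuity_2d_pt_const
    | apply continuity_2d_pt_id1 | apply continuity_2d_pt_id2 ].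

Definition unit_vector (z : C) : C := (Re z / Cmod z, Im z / Cmod z).

Lemma Cmod_sq z : Cmod z * Cmod z = Re z * Re z + Im z * Im z.
Proof. unfold Cmod, Re, Im. rewrite sqrt_sqrt; [ring|]. nra. Qed.

Lemma unit_vector_norm z : 0 < Cmod z ->
  Re (unit_vector z) * Re (unit_vector z) + Im (unit_vector z) * Im (unit_vector z) = 1.
Proof.
  intros Hz. pose proof (Cmod_sq z) as Hsq. unfold unit_vector; simpl.
  transitivity ((Re z * Re z + Im z * Im z) / (Cmod z * Cmod z)); [field; lra|].
  rewrite <- Hsq. field. lra.
Qed.

Lemma unit_vector_continuous (Z : R -> R -> C) s t :
  continuity_2d_pt (fun a b => Re (Z a b)) s t -> continuity_2d_pt (fun a b => Im (Z a b)) s t ->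
  0 < Cmod (Z s t) ->
  continuity_2d_pt (fun a b => Re (unit_vector (Z a b))) s t /\
  continuity_2d_pt (fun a b => Im (unit_vector (Z a b))) s t.
Proof.
  intros HRe HIm Hpos.
  assert (Hmod : continuity_2d_pt (fun a b => Cmod (Z a b)) s t).
  { unfold Cmod. apply (continuity_1d_2d_pt_comp sqrt (fun a b => fst (Z a b) ^ 2 + snd (Z a b) ^ 2)).
    - apply continuity_pt_sqrt. nra.
    - simpl. unfold Re, Im in HRe, HIm. continuity_2d. }
  split; apply continuity_2d_pt_div; auto; lra.
Qed.

(* Reflections are isometries, so they commute with normalization. *)
Lemma unit_vector_reflect p v : Re p * Re p + Im p * Im p = 1 -> 0 < Cmod v ->
  unit_vector (reflect p v) = reflect p (unit_vector v).
Proof.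
  intros Hp Hv.
  assert (Hmodp : Cmod p = 1) by (apply Rsqr_inj; [apply Cmod_ge_0|lra|]; unfold Rsqr; rewrite Cmod_sq; lra).
  assert (Hmod : Cmod (reflect p v) = Cmod v).
  { unfold reflect. rewrite Cmod_opp, !Cmod_mult, Cmod_conj, Hmodp. ring. }
  unfold unit_vector. rewrite Hmod. unfold reflect, Copp, Cmult, Cconj, Re, Im; simpl. f_equal; field; lra.
Qed.

(* Polar coordinates: the unit square [0,1]^2 parametrizes the closed unit disk. *)
Definition polar (s t : R) : C := (s * cos (2 * PI * t), s * sin (2 * PI * t)).

Lemma polar_continuous s t :
  continuity_2d_pt (fun a b => Re (polar a b)) s t /\ continuity_2d_pt (fun a b => Im (polar a b)) s t.
Proof.
  unfold polar, Re, Im; simpl.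
  split; apply continuity_2d_pt_mult; try apply continuity_2d_pt_id1;
    [apply (continuity_1d_2d_pt_comp cos) | apply (continuity_1d_2d_pt_comp sin)];
    try apply continuity_cos; try apply continuity_sin; continuity_2d.
Qed.

Lemma polar_unit t : Re (polar 1 t) * Re (polar 1 t) + Im (polar 1 t) * Im (polar 1 t) = 1.
Proof. unfold polar, Re, Im; simpl. pose proof (sin2_cos2 (2 * PI * t)). unfold Rsqr in *. lra. Qed.

Lemma polar_turn t t' :
  Cmult (Cconj (polar 1 t)) (polar 1 t') = (cos (2 * PI * (t' - t)), sin (2 * PI * (t' - t))).
Proof.
  unfold polar, Cmult, Cconj; simpl.
  replace (2 * PI * (t' - t)) with (2 * PI * t' - 2 * PI * t) by ring.
  rewrite cos_minus, sin_minus. f_equal; ring.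
Qed.

Lemma chart_polar_continuous e s t : continuity_2d_V3 (fun a b => chart e (polar a b)) s t.
Proof.
  destruct (polar_continuous s t) as [HRe HIm].
  assert (HD : continuity_2d_pt (fun a b => chart_denom (polar a b)) s t) by (unfold chart_denom; continuity_2d).
  pose proof (chart_denom_pos (polar s t)).
  apply continuity_2d_V3_of_coords; unfold chart; cbn [c1 c2 c3];
    apply continuity_2d_pt_div; continuity_2d; lra.
Qed.

Definition grid_point (N i : nat) : R := INR i / INR (S N).

Definition sample (F : R -> R -> C) (N : nat) (i j : nat) : C :=
  F (grid_point N i) (grid_point N j).

Lemma grid_point_bounds N i : (i <= S N)%nat -> 0 <= grid_point N i <= 1.
Proof.
  intros Hi. pose proof (lt_0_INR (S N) (Nat.lt_0_succ N)). pose proof (le_INR _ _ Hi). pose proof (pos_INR i).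
  unfold grid_point. split; [apply Rmult_le_pos; [lra | left; apply Rinv_0_lt_compat; lra]|].
  apply (Rmult_le_reg_r (INR (S N))); [assumption|]. field_simplify; lra.
Qed.

Lemma grid_point_step N j : grid_point N (S j) - grid_point N j = / INR (S N).
Proof.
  pose proof (lt_0_INR (S N) (Nat.lt_0_succ N)). unfold grid_point. rewrite (S_INR j). field. lra.
Qed.

Lemma grid_point_first N : grid_point N 0 = 0.
Proof. unfold grid_point. simpl INR. unfold Rdiv. apply Rmult_0_l. Qed.

Lemma grid_point_last N : grid_point N (S N) = 1.
Proof. pose proof (lt_0_INR (S N) (Nat.lt_0_succ N)). unfold grid_point. field. lra. Qed.

Definition uniformly_quarter (F : R -> R -> C) (d : R) : Prop :=
  forall s t s' t', 0 <= s <= 1 -> 0 <= t <= 1 -> 0 <= s' <= 1 -> 0 <= t' <= 1 ->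
    Rabs (s' - s) < d -> Rabs (t' - t) < d -> quarter (Cmult (Cconj (F s t)) (F s' t')).

Lemma sample_close F d N i j i' j' : uniformly_quarter F d -> / INR (S N) < d ->
  (i <= S N)%nat -> (j <= S N)%nat -> (i' = i \/ i' = S i)%nat -> (j' = j \/ j' = S j)%nat ->
  (i' <= S N)%nat -> (j' <= S N)%nat ->
  quarter (Cmult (Cconj (sample F N i j)) (sample F N i' j')).
Proof.
  intros HF Hd Hi Hj Hii Hjj Hi' Hj'. pose proof (Rinv_0_lt_compat _ (lt_0_INR (S N) (Nat.lt_0_succ N))).
  assert (Hstep : forall k k', (k' = k \/ k' = S k)%nat -> Rabs (grid_point N k' - grid_point N k) < d).
  { intros k k' [-> | ->]; [rewrite Rminus_diag, Rabs_R0; lra|].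
    rewrite grid_point_step, Rabs_right; lra. }
  apply HF; auto using grid_point_bounds.
Qed.

Section LoopFamily.
Variable F : R -> R -> C.
Variable d : R.
Hypothesis F_close : uniformly_quarter F d.
Hypothesis F_loop : forall s, F s 1 = F s 0.
Hypothesis F_center : forall t, F 0 t = F 0 0.

Lemma outer_winding_zero N : / INR (S N) < d -> row_winding (sample F N) N (S N) = 0.
Proof.
  intros Hd. rewrite row_winding_invariant.
  - unfold row_winding, sample. rewrite (sum_eq _ (fun _ => 0)), sum_cte; [ring|].
    intros j _. rewrite grid_point_first, (F_center (grid_point N j)), (F_center (grid_point N (S j))).
    apply angle_self.
  - intros i j Hi Hj. apply (sample_close F d); auto; lia.
  - intros i j Hi Hj. apply (sample_close F d); auto; lia.
  - intros i Hi. unfold sample. rewrite grid_point_last, grid_point_first. apply F_loop.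
Qed.
End LoopFamily.

Lemma polar_grid_turn N j :
  Cmult (Cconj (polar 1 (grid_point N j))) (polar 1 (grid_point N (S j))) =
  (cos (2 * PI / INR (S N)), sin (2 * PI / INR (S N))).
Proof. rewrite polar_turn, grid_point_step. reflexivity. Qed.

(* If on the unit circle one family is the reflection of the other along the circle's
   tangent, their windings add up to twice the winding of the circle itself, i.e. 4 pi. *)
Lemma equator_winding_relation (FN FS : R -> R -> C) d N :
  uniformly_quarter FN d -> / INR (S N) < d -> 2 * PI / INR (S N) <= 1 / 4 ->
  (forall t, FS 1 t = reflect (polar 1 t) (FN 1 t)) ->
  row_winding (sample FS N) N (S N) = 4 * PI - row_winding (sample FN N) N (S N).
Proof.
  intros HN Hd Hh Hrel. pose proof (lt_0_INR (S N) (Nat.lt_0_succ N)). pose proof PI_RGT_0.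
  set (h := 2 * PI / INR (S N)) in *.
  destruct (small_rotation h) as [Hsmall Harg]; [split; [apply Rdiv_lt_0_compat|]; lra|].
  unfold row_winding.
  rewrite (sum_eq _ (fun j => 2 * h - angle (sample FN N (S N) j) (sample FN N (S N) (S j)))).
  - rewrite minus_sum, sum_cte. unfold h. field. lra.
  - intros j Hj.
    assert (Hq := sample_close FN d N (S N) j (S N) (S j) HN Hd).
    unfold sample in *. rewrite grid_point_last in *. rewrite !Hrel, angle_reflect.
    + unfold angle at 1. rewrite polar_grid_turn. fold h. rewrite Harg. reflexivity.
    + rewrite polar_grid_turn. exact Hsmall.
    + apply Hq; lia.
Qed.

Lemma fine_grid d : 0 < d -> exists N, / INR (S N) < d /\ 2 * PI / INR (S N) <= 1 / 4.
Proof.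
  intros Hd. pose proof PI_RGT_0.
  destruct (archimed_cor1 (Rmin d (/ (8 * PI)))) as (N & HNsmall & HNpos).
  { apply Rmin_pos; [assumption | apply Rinv_0_lt_compat; lra]. }
  assert (Hstep : / INR (S N) < Rmin d (/ (8 * PI))).
  { eapply Rle_lt_trans; [|exact HNsmall]. apply Rinv_le_contravar; [apply lt_0_INR; assumption|].
    rewrite S_INR; lra. }
  pose proof (Rmin_l d (/ (8 * PI))). pose proof (Rmin_r d (/ (8 * PI))).
  exists N. split; [lra|].
  replace (1 / 4) with (2 * PI * / (8 * PI)) by (field; lra).
  unfold Rdiv. apply Rmult_le_compat_l; lra.
Qed.

Section HairyBall.
Variable u : V3 -> V3.
Hypothesis u_tangent : forall x, on_sphere x -> tangent x (u x).
Hypothesis u_nonzero : forall x, on_sphere x -> u x <> vzero.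
Hypothesis u_continuous : continuous_field u.

Definition pulled_field (e s t : R) : C := chart_pull e (polar s t) (u (chart e (polar s t))).

Definition square_field (e s t : R) : C := unit_vector (pulled_field e s t).

(* The pulled-back field never vanishes since u does not and the charts are conformal. *)
Lemma pulled_field_nonzero e s t : e * e = 1 -> 0 < Cmod (pulled_field e s t).
Proof.
  intros He. pose proof (chart_on_sphere e (polar s t) He) as Hsph.
  pose proof (chart_pull_norm e _ _ He (u_tangent _ Hsph)) as Hnorm.
  pose proof (dot_self_pos _ (u_nonzero _ Hsph)). pose proof (chart_denom_pos (polar s t)).
  assert (Hpos : 0 < chart_denom (polar s t) * chart_denom (polar s t) * dot (u (chart e (polar s t))) (u (chart e (polar s t))))
    by (apply Rmult_lt_0_compat; [apply Rmult_lt_0_compat|]; assumption).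
  pose proof (Cmod_ge_0 (pulled_field e s t)) as Hge. pose proof (Cmod_sq (pulled_field e s t)) as Hsq.
  unfold pulled_field in *. destruct Hge as [|Hz]; [assumption|]. rewrite <- Hz in Hsq. lra.
Qed.

Lemma square_field_continuous e s t : e * e = 1 ->
  continuity_2d_pt (fun a b => Re (square_field e a b)) s t /\
  continuity_2d_pt (fun a b => Im (square_field e a b)) s t.
Proof.
  intros He. destruct (polar_continuous s t) as [HRe HIm].
  destruct (coords_of_continuity_2d_V3 _ s t
    (continuity_2d_V3_comp u _ s t u_continuous (fun a b => chart_on_sphere e (polar a b) He)
      (chart_polar_continuous e s t))) as (Hu1 & Hu2 & Hu3).
  apply unit_vector_continuous; [..|apply pulled_field_nonzero, He];
    unfold pulled_field, chart_pull; cbn [Re Im fst snd]; continuity_2d.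
Qed.

(* Uniform continuity on the compact square makes nearby directions make small angles. *)
Lemma square_field_uniformly_quarter e : e * e = 1 -> exists d, 0 < d /\ uniformly_quarter (square_field e) d.
Proof.
  intros He. set (eps := mkposreal (1 / 8) ltac:(lra)).
  destruct (uniform_continuity_2d (fun a b => Re (square_field e a b)) 0 1 0 1
    (fun s t _ _ => proj1 (square_field_continuous e s t He)) eps) as [d1 Hd1].
  destruct (uniform_continuity_2d (fun a b => Im (square_field e a b)) 0 1 0 1
    (fun s t _ _ => proj2 (square_field_continuous e s t He)) eps) as [d2 Hd2].
  exists (Rmin d1 d2). split; [apply Rmin_pos; apply cond_pos|].
  intros s t s' t' Hs Ht Hs' Ht' Hds Hdt. pose proof (Rmin_l d1 d2). pose proof (Rmin_r d1 d2).
  specialize (Hd1 s t s' t' Hs Ht Hs' Ht' ltac:(lra) ltac:(lra)).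
  specialize (Hd2 s t s' t' Hs Ht Hs' Ht' ltac:(lra) ltac:(lra)).
  change (pos eps) with (1 / 8) in Hd1, Hd2. apply Rabs_def2 in Hd1, Hd2.
  apply unit_quarter; try apply unit_vector_norm, pulled_field_nonzero, He.
  unfold Re, Im in Hd1, Hd2. nra.
Qed.

Lemma square_field_loop e s : square_field e s 1 = square_field e s 0.
Proof.
  unfold square_field, pulled_field, polar.
  rewrite Rmult_1_r, Rmult_0_r, cos_2PI, sin_2PI, cos_0, sin_0. reflexivity.
Qed.

Lemma square_field_center e t : square_field e 0 t = square_field e 0 0.
Proof. unfold square_field, pulled_field, polar. rewrite !Rmult_0_l. reflexivity. Qed.

Lemma square_field_equator t : square_field (-1) 1 t = reflect (polar 1 t) (square_field 1 1 t).
Proof.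
  unfold square_field, pulled_field. rewrite chart_equator by apply polar_unit.
  rewrite chart_pull_equator; [|apply polar_unit|apply u_tangent, chart_on_sphere; ring].
  apply unit_vector_reflect; [apply polar_unit|]. apply (pulled_field_nonzero 1 1 t). ring.
Qed.

Theorem hairy_ball : False.
Proof.
  destruct (square_field_uniformly_quarter 1 ltac:(ring)) as (dN & HdN & HN).
  destruct (square_field_uniformly_quarter (-1) ltac:(ring)) as (dS & HdS & HS).
  destruct (fine_grid (Rmin dN dS)) as (N & Hstep & Hh); [apply Rmin_pos; assumption|].
  pose proof (Rmin_l dN dS). pose proof (Rmin_r dN dS). pose proof PI_RGT_0.
  pose proof (equator_winding_relation (square_field 1) (square_field (-1)) dN N HN ltac:(lra) Hh
                square_field_equator) as Hrel.
  rewrite (outer_winding_zero (square_field 1) dN HN (square_field_loop 1) (square_field_center 1)),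
    (outer_winding_zero (square_field (-1)) dS HS (square_field_loop (-1)) (square_field_center (-1)))
    in Hrel by lra.
  lra.
Qed.
End HairyBall.

Lemma tangent_part_continuous (s : V3 -> FV) : continuous_on_S2 s -> continuous_field (fun x => snd (s x)).
Proof.
  intros Hs x Hx eps Heps. destruct (Hs x Hx eps Heps) as (delta & Hdelta & Hclose).
  exists delta. split; [assumption|]. intros y Hy Hxy.
  eapply Rle_lt_trans; [apply dist3_snd_le_distF | apply Hclose; assumption].
Qed.

Lemma tangent_section_vanishes (e : V3 -> FV) : cont_section e ->
  (forall x, on_sphere x -> fst (e x) = 0) -> exists x, on_sphere x /\ e x = fzero.
Proof.
  intros [Hfib Hcont] Hfst. apply NNPP. intros Hnone.
  apply (hairy_ball (fun x => snd (e x))).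
  - intros x Hx. apply (Hfib x Hx).
  - intros x Hx Hzero. apply Hnone. exists x. split; [assumption|].
    rewrite (surjective_pairing (e x)), Hfst, Hzero by assumption. reflexivity.
  - now apply tangent_part_continuous.
Qed.

Lemma basis_second_nonzero x w1 w2 w3 : fiber_basis x w1 w2 w3 -> w2 <> fzero.
Proof.
  intros (_ & _ & _ & Hfree & _) Hzero.
  assert (Hcomb : comb3 0 1 0 w1 w2 w3 = fzero).
  { rewrite Hzero. unfold comb3, fadd, fscale, fzero, vadd, vscale, vzero; simpl. f_equal; [ring|f_equal; ring]. }
  destruct (Hfree _ _ _ Hcomb) as (_ & H10 & _). lra.
Qed.

Theorem mainTheorem5 :
  (forall x, on_sphere x -> parseval_R (f1 x) (f2 x) (f3 x)) /\
  (exists e1 e2 e3 : V3 -> FV, moving_basis e1 e2 e3) /\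
  ~ (exists e1 e2 e3 : V3 -> FV,
        moving_basis e1 e2 e3 /\
        forall x, on_sphere x ->
          fst (e1 x) = f1 x /\ fst (e2 x) = f2 x /\ fst (e3 x) = f3 x).
Proof.
  split; [|split].
  - intros x _ t. unfold f1, f2, f3. ring.
  - exists (frame_section b1), (frame_section b2), (frame_section b3). apply trivializing_moving_basis.
  - intros (e1 & e2 & e3 & (_ & He2 & _ & Hbasis) & Hproj).
    destruct (tangent_section_vanishes e2 He2) as (x & Hx & Hzero).
    + intros x Hx. apply (Hproj x Hx).
    + exact (basis_second_nonzero x _ _ _ (Hbasis x Hx) Hzero).
Qed.
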